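(* Let $\Gamma$ be a totally ordered additive abelian group, $E$ a finite set, $r\ge0$, and $\nu\colon\Delta_E^r\to\overline{\Gamma}$ a function with cage $\mathbf{a}=(a_s)_{s\in E}$. Let $\pi\colon E'\to E$ be a map of finite sets with $|\pi^{-1}(s)|=a_s$ for all $s\in E$, and let the multisymmetric lift $M_\pi(\nu)\colon\binom{E'}{r}\to\overline{\Gamma}$ be $M_\pi(\nu)(S')=\nu\big(\sum_{s'\in S'}e_{\pi(s')}\big)$. Then $\nu$ is $M$-convex if and only if $M_\pi(\nu)$ is a valuated matroid of rank $r$ on $E'$.
   Context: $\overline{\Gamma}=\Gamma\sqcup\{\infty\}$ with $\infty$ larger than every element of $\Gamma$. $e_s$ is the standard basis vector of $\mathbb{Z}^E$; $\Delta_E^r=\{\alpha\in\mathbb{Z}^E_{\ge0}\mid\sum_e\alpha_e=r\}$; $\binom{E'}{r}$ is the set of $r$-element subsets of $E'$. The cage of $\nu$ is the tuple $(a_s)_{s\in E}$ where $a_s$ is the smallest non-negative integer with $a_s\geq\alpha_s$ for all $\alpha\in\Delta_E^r$ with $\nu(\alpha)\neq\infty$. An $M$-convex function of rank $r$ is a map $\nu\colon\Delta_E^r\to\overline{\Gamma}$, not identically $\infty$, such that for all $\alpha,\beta\in\Delta_E^r$ and $s\in E$ with $\alpha_s>\beta_s$ there is $t\in E$ with $\beta_t>\alpha_t$ and $\nu(\alpha)+\nu(\beta)\geq\nu(\alpha-e_s+e_t)+\nu(\beta-e_t+e_s)$. A valuated matroid of rank $r$ on a finite set $X$ is a map $\mu\colon\binom{X}{r}\to\overline{\Gamma}$,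 not identically $\infty$, such that for all $S,T\in\binom{X}{r}$ and $s\in S- T$ there is $t\in T- S$ with $\mu(S)+\mu(T)\geq\mu(S-\{s\}\cup\{t\})+\mu(T-\{t\}\cup\{s\})$. *)

From mathcomp Require Import all_boot all_order all_algebra.
Set Implicit Arguments. Unset Strict Implicit. Unset Printing Implicit Defensive.
Import GRing.Theory.
Local Open Scope ring_scope.

Section Defs.
Variable G : zmodType.
Variable leG : rel G.

Definition ordered_group_axioms : Prop :=
  [/\ reflexive leG, antisymmetric leG, transitive leG, total leG
    & forall a b c : G, leG a b -> leG (a + c) (b + c)].

(* Gamma-bar = Gamma ∪ {oo}, represented by option G with None = oo. *)
Definition addGb (x y : option G) : option G :=
  match x, y with Some a, Some b => Some (a + b) | _, _ => None end.

Definition leGb (x y : option G) : bool :=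
  match x, y with
  | _, None => true
  | None, Some _ => false
  | Some a, Some b => leG a b
  end.
End Defs.

Section Defs2.
Variable G : zmodType.
Variable leG : rel G.

Definition inDelta (E : finType) (r : nat) (al : {ffun E -> nat}) : bool :=
  (\sum_(e : E) al e)%N == r.

Definition ebase (E : finType) (s : E) : {ffun E -> nat} :=
  [ffun u => nat_of_bool (u == s)].

(* alpha - e_s + e_t  (only used when alpha_s >= 1) *)
Definition exch (E : finType) (al : {ffun E -> nat}) (s t : E) : {ffun E -> nat} :=
  [ffun u => (al u - (u == s) + (u == t))%N].

Definition is_cage (E : finType) (r : nat) (nu : {ffun E -> nat} -> option G)
  (a : E -> nat) : Prop :=
  forall s : E,
    (forall al, inDelta r al -> nu al != None -> (al s <= a s)%N) /\
    (forall b : nat, (forall al, inDelta r al -> nu al != None -> (al s <= b)%N) ->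
       (a s <= b)%N).

Definition M_convex (E : finType) (r : nat) (nu : {ffun E -> nat} -> option G) : Prop :=
  (exists al, inDelta r al /\ nu al != None) /\
  forall al be : {ffun E -> nat}, inDelta r al -> inDelta r be ->
  forall s : E, (be s < al s)%N ->
  exists t : E, (al t < be t)%N /\
    leGb leG (addGb (nu (exch al s t)) (nu (exch be t s))) (addGb (nu al) (nu be)).

Definition valuated_matroid (X : finType) (r : nat) (mu : {set X} -> option G) : Prop :=
  (exists S : {set X}, #|S| = r /\ mu S != None) /\
  forall S T : {set X}, #|S| = r -> #|T| = r ->
  forall s, s \in S :\: T ->
  exists2 t, t \in T :\: S &
    leGb leG (addGb (mu (t |: (S :\ s))) (mu (s |: (T :\ t)))) (addGb (mu S) (mu T)).

Definition multisym_lift (E E' : finType) (pi : E' -> E)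
  (nu : {ffun E -> nat} -> option G) (S' : {set E'}) : option G :=
  nu [ffun u => (\sum_(s' in S') ebase (pi s') u)%N].
End Defs2.

From mathcomp Require Import all_boot all_order all_algebra.
From mathcomp Require Import zify.
Set Implicit Arguments. Unset Strict Implicit.

(* A set S' of size r in E' lifts the point mult S' of Delta_E^r, and an
   exchange s' -> t' in S' becomes the exchange pi s' -> pi t' of mult S'.
   Conversely every alpha below the fibre sizes is realised by the set
   taking the first alpha_s elements of each fibre.  So exchanges between
   different fibres are exactly the exchanges of nu, while exchanges inside
   a fibre do not change mult at all and hold by reflexivity.  Points outside
   the cage carry the value oo, for which the exchange inequality is void. *)

Lemma inDelta_exists_lt (E : finType) (r : nat) (al be : {ffun E -> nat}) (s : E) :
  inDelta r al -> inDelta r be -> (be s < al s)%N -> exists t, (al t < be t)%N.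
Proof.
move=> /eqP Dal /eqP Dbe lt_s.
case: (boolP [exists t, al t < be t]) => [/existsP // | /existsPn ge_al].
have le_rest : (\sum_(t | t != s) be t <= \sum_(t | t != s) al t)%N.
  by apply: leq_sum => t _; rewrite leqNgt ge_al.
rewrite (bigD1 s) //= in Dal; rewrite (bigD1 s) //= in Dbe; lia.
Qed.

Lemma exch_id (E : finType) (al : {ffun E -> nat}) (s : E) :
  (0 < al s)%N -> exch al s s = al.
Proof.
move=> al_s; apply/ffunP => u; rewrite ffunE.
by case: (eqVneq u s) => [->|_]; [lia | rewrite subn0 addn0].
Qed.

Section ExtendedOrder.
Context {G : zmodType} (leG : rel G).

Lemma leGb_refl : reflexive leG -> reflexive (leGb leG).
Proof. by move=> le_refl [x|] /=. Qed.

Lemma leGb_addGb_oo (x y z : option G) :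
  (x == None) || (y == None) -> leGb leG z (addGb x y).
Proof. by case: x => [x|]; case: y => [y|]; case: z. Qed.

End ExtendedOrder.

Section MultisymmetricLift.
Context {E E' : finType} (pi : E' -> E).

Definition fiber (u : E) : {set E'} := [set x | pi x == u].

Lemma in_fiber x u : (x \in fiber u) = (pi x == u).
Proof. by rewrite inE. Qed.

Definition mult (S : {set E'}) : {ffun E -> nat} :=
  [ffun u => (\sum_(s' in S) ebase (pi s') u)%N].

Lemma multisym_liftE {G : zmodType} (nu : {ffun E -> nat} -> option G) S :
  multisym_lift pi nu S = nu (mult S).
Proof. by []. Qed.

Lemma multE (S : {set E'}) u : mult S u = #|S :&: fiber u|.
Proof.
rewrite ffunE -sum1_card; symmetry.
rewrite (eq_bigl (fun x => (x \in S) && (pi x == u))) => [|x]; last by rewrite !inE.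
rewrite big_mkcondr /=; apply: eq_bigr => x _.
by rewrite /ebase ffunE eq_sym; case: (pi x == u).
Qed.

Lemma sum_mult (S : {set E'}) : (\sum_u mult S u)%N = #|S|.
Proof.
rewrite -sum1_card; under eq_bigr do rewrite ffunE.
rewrite exchange_big /=; apply: eq_bigr => x _.
rewrite (bigD1 (pi x)) //= big1 /ebase ?ffunE ?eqxx ?addn0 //.
by move=> u /negbTE; rewrite ffunE => ->.
Qed.

Lemma inDelta_mult r (S : {set E'}) : #|S| = r -> inDelta r (mult S).
Proof. by move=> cardS; rewrite /inDelta sum_mult cardS. Qed.

Lemma mult_gt0 (S : {set E'}) x : x \in S -> (0 < mult S (pi x))%N.
Proof. by move=> Sx; rewrite multE; apply/card_gt0P; exists x; rewrite inE Sx in_fiber eqxx. Qed.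

Lemma mult_setD1 (S : {set E'}) s : s \in S -> mult S (pi s) = (mult (S :\ s) (pi s)).+1.
Proof. by move=> Ss; rewrite !ffunE (big_setD1 s Ss) /ebase ffunE eqxx. Qed.

Lemma mult_exch (S : {set E'}) s t : s \in S -> t \notin S ->
  mult (t |: (S :\ s)) = exch (mult S) (pi s) (pi t).
Proof.
move=> Ss St; apply/ffunP => u; rewrite !ffunE.
have St' : t \notin S :\ s by rewrite !inE negb_and St orbT.
rewrite big_setU1 //= (big_setD1 s Ss) /= /ebase !ffunE.
by case: (u == pi s); case: (u == pi t) => /=; lia.
Qed.

Lemma mult_lt_exists (S T : {set E'}) u :
  (mult S u < mult T u)%N -> exists2 t, t \in T :\: S & pi t = u.
Proof.
rewrite !multE => lt_ST.
have /subsetPn[t] : ~~ (T :&: fiber u \subset S :&: fiber u).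
  by apply/negP => /subset_leq_card; rewrite leqNgt lt_ST.
rewrite !inE => /andP[Tt /eqP <-]; rewrite eqxx andbT => St.
by exists t; rewrite // inE St.
Qed.

Definition fiber_rank (x : E') : nat := index x (enum (fiber (pi x))).

Definition canonical_lift (al : {ffun E -> nat}) : {set E'} :=
  [set x | fiber_rank x < al (pi x)].

Lemma exists_fiber_rank u i :
  (i < #|fiber u|)%N -> exists2 x, pi x = u & fiber_rank x = i.
Proof.
move=> i_lt; have [y _] : exists y, y \in fiber u.
  by apply/card_gt0P; apply: leq_ltn_trans i_lt.
have fiber_x : nth y (enum (fiber u)) i \in enum (fiber u).
  by apply: mem_nth; rewrite -cardE.
have pi_x : pi (nth y (enum (fiber u)) i) = u.
  by move: fiber_x; rewrite mem_enum inE => /eqP.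
exists (nth y (enum (fiber u)) i) => //.
by rewrite /fiber_rank pi_x index_uniq ?enum_uniq // -cardE.
Qed.

Section CanonicalLift.
Variable al : {ffun E -> nat}.
Hypothesis al_le_fiber : forall u, (al u <= #|fiber u|)%N.

Lemma mult_canonical_lift : mult (canonical_lift al) = al.
Proof.
apply/ffunP => u; rewrite multE.
have -> : canonical_lift al :&: fiber u = [set x in take (al u) (enum (fiber u))].
  apply/setP => x; rewrite !inE.
  case: (eqVneq (pi x) u) => [<-|ne].
    by rewrite andbT /fiber_rank in_take // mem_enum inE.
  rewrite andbF; apply/esym/negbTE/negP => /mem_take.
  by rewrite mem_enum inE (negbTE ne).
rewrite cardsE (card_uniqP (take_uniq _ (enum_uniq _))).
by apply: size_takel; rewrite -cardE.
Qed.

Lemma card_canonical_lift r : inDelta r al -> #|canonical_lift al| = r.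
Proof. by move=> /eqP <-; rewrite -sum_mult mult_canonical_lift. Qed.

End CanonicalLift.

Section Exchange.
Context {G : zmodType} (leG : rel G) (r : nat) (nu : {ffun E -> nat} -> option G).
Hypothesis nu_le_fiber :
  forall al, inDelta r al -> nu al != None -> forall u, (al u <= #|fiber u|)%N.

Lemma valuated_matroid_lift_exchange : reflexive leG ->
  (forall al be, inDelta r al -> inDelta r be -> forall s, (be s < al s)%N ->
    exists t, (al t < be t)%N /\
      leGb leG (addGb (nu (exch al s t)) (nu (exch be t s))) (addGb (nu al) (nu be))) ->
  forall S T : {set E'}, #|S| = r -> #|T| = r -> forall s, s \in S :\: T ->
  exists2 t, t \in T :\: S &
    leGb leG (addGb (multisym_lift pi nu (t |: (S :\ s)))
                    (multisym_lift pi nu (s |: (T :\ t))))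
             (addGb (multisym_lift pi nu S) (multisym_lift pi nu T)).
Proof.
move=> le_refl nu_exchange S T cardS cardT s; rewrite inE => /andP[Ts Ss].
case: (ltnP (mult T (pi s)) (mult S (pi s))) => [lt_TS | le_ST].
- have [u [lt_u le_nu]] :=
    nu_exchange _ _ (inDelta_mult cardS) (inDelta_mult cardT) _ lt_TS.
  have [t /setDP[Tt St] pi_t] := mult_lt_exists lt_u.
  by exists t; rewrite ?inE ?Tt ?St // !multisym_liftE !mult_exch // pi_t.
- (* an element of T in the fibre of s that is not in S exchanges with s
     without changing the multiplicity vectors *)
  have [|t /setDP[Tt] St pi_t] := @mult_lt_exists (S :\ s) T (pi s).
    by move: le_ST; rewrite (mult_setD1 Ss).
  have {}St : t \notin S.
    have t_neq_s : t != s by apply: contraNneq Ts => <-.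
    by move: St; rewrite !inE t_neq_s.
  exists t; first by rewrite inE St Tt.
  have T_pos : (0 < mult T (pi s))%N by rewrite -pi_t mult_gt0.
  rewrite !multisym_liftE !mult_exch // pi_t !exch_id // ?mult_gt0 //.
  exact: leGb_refl.
Qed.

Lemma M_convex_multisym_lift :
  reflexive leG -> M_convex leG r nu -> valuated_matroid leG r (multisym_lift pi nu).
Proof.
move=> le_refl [[al [Dal nu_al]] nu_exchange]; split.
  have al_le := nu_le_fiber Dal nu_al.
  exists (canonical_lift al).
  by rewrite (card_canonical_lift al_le Dal) multisym_liftE mult_canonical_lift.
exact: valuated_matroid_lift_exchange.
Qed.

Lemma multisym_lift_M_convex :
  valuated_matroid leG r (multisym_lift pi nu) -> M_convex leG r nu.
Proof.
move=> [[S [cardS nu_S]] lift_exchange]; split.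
  by exists (mult S); rewrite inDelta_mult.
move=> al be Dal Dbe s lt_s.
case: (boolP ((nu al == None) || (nu be == None))) => [oo | /norP[nu_al nu_be]].
  have [t lt_t] := inDelta_exists_lt Dal Dbe lt_s.
  by exists t; split; last exact: leGb_addGb_oo.
have al_le := nu_le_fiber Dal nu_al; have be_le := nu_le_fiber Dbe nu_be.
(* the element of rank be_s in the fibre of s lies in the lift of al only *)
have [x pi_x rank_x] := exists_fiber_rank (leq_trans lt_s (al_le s)).
have x_diff : x \in canonical_lift al :\: canonical_lift be.
  by rewrite !inE pi_x rank_x lt_s ltnn.
have [t /setDP[t_be t_al]] := lift_exchange _ _ (card_canonical_lift al_le Dal)
  (card_canonical_lift be_le Dbe) x x_diff.
case/setDP: x_diff => x_al x_be.
rewrite !multisym_liftE !mult_exch // !mult_canonical_lift // pi_x => le_nu.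
exists (pi t); split => //.
by move: t_al t_be; rewrite !inE -leqNgt; exact: leq_ltn_trans.
Qed.

End Exchange.

End MultisymmetricLift.

Theorem proposition1p4 (G : zmodType) (leG : rel G)
  (HG : ordered_group_axioms leG)
  (E : finType) (r : nat) (nu : {ffun E -> nat} -> option G) (a : E -> nat)
  (Hcage : is_cage r nu a)
  (E' : finType) (pi : E' -> E)
  (Hpi : forall s : E, #|[set s' | pi s' == s]| = a s) :
  M_convex leG r nu <-> valuated_matroid leG r (multisym_lift pi nu).
Proof.
have le_refl : reflexive leG by case: HG.
have nu_le_fiber al : inDelta r al -> nu al != None ->
    forall u, (al u <= #|fiber pi u|)%N.
  by move=> Dal nu_al u; rewrite /fiber Hpi; apply: (Hcage u).1.
split; [exact: M_convex_multisym_lift | exact: multisym_lift_M_convex].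
Qed.
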